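(* Assume $\sum_{i=1}^M b_i\ge 1$ and let $\mathbf r^\star=\mathbf r^\star(\epsilon)$ be the energy-adequate solution defined in the context. Then, with $M$, $(w_i)$, $(b_i)$ fixed, as $\epsilon\to0^+$, $$\big|\bar\Delta(\mathbf r^\star)-\bar\Delta_{\mathrm{opt}}(\epsilon)\big|\le 2\sqrt{\epsilon}\,C_1+o(\sqrt{\epsilon}),\qquad C_1=\sum_{i=1}^M\frac{w_i}{\min\{b_i,\beta^\star\sqrt{w_i}\}},$$ i.e. there is a function $h$ with $h(\epsilon)/\sqrt\epsilon\to0$ as $\epsilon\to 0^+$ such that the gap is at most $2\sqrt\epsilon C_1+h(\epsilon)$ for all $\epsilon>0$.
   Context: Fix an integer $M\ge1$, weights $w_1,\dots,w_M>0$, constants $b_1,\dots,b_M>0$, and $\epsilon>0$ (interpreted as the ratio of carrier-sensing time to mean packet transmission time). For $\mathbf r=(r_1,\dots,r_M)\in(0,\infty)^M$ write $S(\mathbf r)=\sum_{i=1}^M r_i$ and define $$\bar\Delta(\mathbf r)=\sum_{l=1}^M \frac{w_l e^{-r_l\epsilon}}{r_l}\, e^{\epsilon S(\mathbf r)}\big(1+S(\mathbf r)\big)+\sum_{l=1}^M w_l,\qquad \sigma_l(\mathbf r)=\frac{(1-e^{-r_l\epsilon})S(\mathbf r)+r_le^{-r_l\epsilon}}{S(\mathbf r)+1}.$$ Problem 1: minimize $\bar\Delta(\mathbf r)$ over $\mathbf r\in(0,\infty)^M$ subject to $\sigma_l(\mathbf r)\le b_l$ for all $l$. Its optimal (infimum)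 value is denoted $\bar\Delta_{\mathrm{opt}}(\epsilon)$. Energy-adequate solution (when $\sum_i b_i\ge1$): let $\beta^\star\in[0,\max_l b_l/\sqrt{w_l}]$ be the root of $\sum_{i=1}^M\min\{b_i,\beta^\star\sqrt{w_i}\}=1$, let $x^\star=-\tfrac12+\sqrt{\tfrac14+\tfrac1\epsilon}$, and set $r^\star_l=\min\{b_l,\beta^\star\sqrt{w_l}\}\,x^\star$ for $l=1,\dots,M$. *)

(* classical reals. Indices l = 1..M are represented as 0..M-1. *)
From Stdlib Require Import Reals Lra.
Open Scope R_scope.

Fixpoint sumR (n : nat) (f : nat -> R) : R :=
  match n with
  | O => 0
  | S k => sumR k f + f k
  end.

(* maxR n f = max_{i<n} f i  (for n >= 1; returns f 0 for n = 0, unused) *)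
Fixpoint maxR (n : nat) (f : nat -> R) : R :=
  match n with
  | O => f O
  | S O => f O
  | S k => Rmax (maxR k f) (f k)
  end.

Definition Ssum (M : nat) (r : nat -> R) : R := sumR M r.

Definition Delta_bar (M : nat) (w : nat -> R) (eps : R) (r : nat -> R) : R :=
  sumR M (fun l => w l * exp (- r l * eps) / r l * exp (eps * Ssum M r) * (1 + Ssum M r))
  + sumR M w.

Definition sigma (M : nat) (eps : R) (r : nat -> R) (l : nat) : R :=
  ((1 - exp (- r l * eps)) * Ssum M r + r l * exp (- r l * eps)) / (Ssum M r + 1).

Definition feasible (M : nat) (b : nat -> R) (eps : R) (r : nat -> R) : Prop :=
  forall l, (l < M)%nat -> 0 < r l /\ sigma M eps r l <= b l.

Definition is_opt_value (M : nat) (w b : nat -> R) (eps v : R) : Prop :=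
  (forall r, feasible M b eps r -> v <= Delta_bar M w eps r) /\
  (forall u, (forall r, feasible M b eps r -> u <= Delta_bar M w eps r) -> u <= v).

Definition xstar (eps : R) : R := - / 2 + sqrt (/ 4 + / eps).

Definition rstar (b w : nat -> R) (beta eps : R) (l : nat) : R :=
  Rmin (b l) (beta * sqrt (w l)) * xstar eps.

Definition C1const (M : nat) (w b : nat -> R) (beta : R) : R :=
  sumR M (fun i => w i / Rmin (b i) (beta * sqrt (w i))).

(* Lower bound: for feasible r, the shares q_l := r_l / (S + 1) satisfy q_l <= sigma_l <= b_l and
   sum_l q_l <= 1, while the l-th term of Delta_bar is at least w_l / q_l.  Minimising
   sum_l w_l / q_l over such shares is a water-filling problem whose optimum is attained at
   m_l = min {b_l, beta sqrt w_l}, so Delta_bar_opt >= sum w + C_1.  Upper bound: with x := x_star,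
   r_star = x m is feasible, sums to x, and Delta_bar (r_star) <= sum w + C_1 e^(eps x) (1 + x) / x;
   the relation x (x + 1) eps = 1 makes the last factor 1 + 2 sqrt eps + O(eps). *)
From Pilot Require Import Defs.
From Stdlib Require Import Reals Lra Lia.
Open Scope R_scope.

Lemma sumR_ext n f g : (forall i, (i < n)%nat -> f i = g i) -> sumR n f = sumR n g.
Proof.
  induction n as [|n IH]; intros H; simpl; [reflexivity|].
  rewrite IH, H; auto.
Qed.

Lemma sumR_le n f g : (forall i, (i < n)%nat -> f i <= g i) -> sumR n f <= sumR n g.
Proof.
  induction n as [|n IH]; intros H; simpl; [lra|].
  apply Rplus_le_compat; auto.
Qed.

Lemma sumR_scal n c f : sumR n (fun i => c * f i) = c * sumR n f.
Proof. induction n as [|n IH]; simpl; [ring|]. rewrite IH; ring. Qed.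

Lemma sumR_minus n f g : sumR n (fun i => f i - g i) = sumR n f - sumR n g.
Proof. induction n as [|n IH]; simpl; [ring|]. rewrite IH; ring. Qed.

Lemma sumR_nonneg n f : (forall i, (i < n)%nat -> 0 <= f i) -> 0 <= sumR n f.
Proof.
  induction n as [|n IH]; intros H; simpl; [lra|].
  apply Rplus_le_le_0_compat; auto.
Qed.

Lemma sumR_term_le n f l :
  (forall i, (i < n)%nat -> 0 <= f i) -> (l < n)%nat -> f l <= sumR n f.
Proof.
  induction n as [|n IH]; intros H Hl; [lia|]. simpl.
  destruct (Nat.eq_dec l n) as [->|Hne].
  - assert (0 <= sumR n f) by (apply sumR_nonneg; auto). lra.
  - assert (f l <= sumR n f) by (apply IH; auto; lia).
    assert (0 <= f n) by auto. lra.
Qed.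

Lemma exp_le_monotone x y : x <= y -> exp x <= exp y.
Proof.
  intros [Hlt|Heq]; [left; apply exp_increasing; exact Hlt|right; rewrite Heq; reflexivity].
Qed.

Lemma exp_le_1 x : x <= 0 -> exp x <= 1.
Proof. intros Hx. rewrite <- exp_0. apply exp_le_monotone; exact Hx. Qed.

Lemma exp_le_quadratic s : 0 <= s <= / 2 -> exp s <= 1 + s + 2 * (s * s).
Proof.
  intros Hs.
  assert (Hinv : exp s * exp (- s) = 1) by (rewrite <- exp_plus, Rplus_opp_r; apply exp_0).
  assert (H1 := exp_ineq1_le (- s)). assert (0 < exp s) by apply exp_pos.
  assert (exp s * (1 - s) <= 1) by nra.
  assert (1 <= (1 + s + 2 * (s * s)) * (1 - s)) by nra.
  nra.
Qed.

Definition share (b w : nat -> R) (beta : R) (i : nat) : R := Rmin (b i) (beta * sqrt (w i)).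

Lemma share_sum_one_beta_pos n w b beta :
  0 <= beta -> sumR n (share b w beta) = 1 -> 0 < beta.
Proof.
  intros [Hpos|<-] Hsum; [exact Hpos|].
  assert (sumR n (share b w 0) <= sumR n (fun _ => 0)).
  { apply sumR_le. intros i _. unfold share. rewrite Rmult_0_l. apply Rmin_r. }
  assert (sumR n (fun _ => 0) = 0).
  { transitivity (0 * sumR n (fun _ => 0)); [|ring].
    rewrite <- sumR_scal. apply sumR_ext. intros; ring. }
  lra.
Qed.

Lemma inv_tangent_le w m q : 0 <= w -> 0 < m -> 0 < q -> w / m - w / (m * m) * (q - m) <= w / q.
Proof.
  intros Hw Hm Hq.
  assert (E : w / q - (w / m - w / (m * m) * (q - m)) = w * ((q - m) * (q - m)) / (q * m * m))
    by (field; lra).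
  assert (0 <= w * ((q - m) * (q - m)) / (q * m * m)).
  { apply Rmult_le_pos; [apply Rmult_le_pos; [lra|apply Rle_0_sqr]|].
    left; apply Rinv_0_lt_compat; repeat apply Rmult_lt_0_compat; lra. }
  lra.
Qed.

(* The tangent slope -w/m^2 of w/q at the share m is at most -1/beta^2, and where it is
   strictly smaller the cap b binds, so q - m <= 0 there. *)
Lemma waterfilling_pointwise w b beta q :
  0 < w -> 0 < b -> 0 < beta -> 0 < q -> q <= b ->
  let m := Rmin b (beta * sqrt w) in w / m - / (beta * beta) * (q - m) <= w / q.
Proof.
  intros Hw Hb Hbeta Hq Hqb m.
  assert (Hsw : 0 < sqrt w) by (apply sqrt_lt_R0; exact Hw).
  assert (Hss : sqrt w * sqrt w = w) by (apply sqrt_sqrt; lra).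
  assert (Hm : 0 < m) by (apply Rmin_glb_lt; [exact Hb|apply Rmult_lt_0_compat; auto]).
  assert (Hslope : / (beta * beta) * (q - m) >= w / (m * m) * (q - m)).
  { unfold m, Rmin; destruct (Rle_dec b (beta * sqrt w)) as [Hcap|_].
    - assert (Hk : / (beta * beta) <= w / (b * b)).
      { assert (0 < beta * beta) by (apply Rmult_lt_0_compat; lra).
        assert (0 < b * b) by (apply Rmult_lt_0_compat; lra).
        apply (Rmult_le_reg_r (beta * beta * (b * b))); [apply Rmult_lt_0_compat; lra|].
        replace (/ (beta * beta) * (beta * beta * (b * b))) with (b * b) by (field; lra).
        replace (w / (b * b) * (beta * beta * (b * b))) with ((beta * sqrt w) * (beta * sqrt w))
          by (rewrite Rmult_assoc, (Rmult_comm (sqrt w)), Rmult_assoc, Hss; field; lra).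
        apply Rmult_le_compat; lra. }
      nra.
    - right. replace (beta * sqrt w * (beta * sqrt w)) with (beta * beta * w)
        by (rewrite <- Hss at 1; ring).
      field. lra. }
  assert (H := inv_tangent_le w m q). lra.
Qed.

Lemma waterfilling n w b beta q :
  0 < beta ->
  (forall i, (i < n)%nat -> 0 < w i /\ 0 < b i /\ 0 < q i /\ q i <= b i) ->
  sumR n q <= 1 -> sumR n (share b w beta) = 1 ->
  sumR n (fun i => w i / share b w beta i) <= sumR n (fun i => w i / q i).
Proof.
  intros Hbeta Hi Hq Hm.
  apply Rle_trans with
    (sumR n (fun i => w i / share b w beta i - / (beta * beta) * (q i - share b w beta i))).
  - rewrite sumR_minus, sumR_scal, sumR_minus, Hm.
    assert (0 < / (beta * beta)) by (apply Rinv_0_lt_compat; nra). nra.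
  - apply sumR_le. intros i Hlt. destruct (Hi i Hlt) as (? & ? & ? & ?).
    apply waterfilling_pointwise; auto.
Qed.

Lemma share_le_sigma M eps r l :
  0 < eps -> 0 < r l -> r l <= Ssum M r -> r l / (Ssum M r + 1) <= Defs.sigma M eps r l.
Proof.
  intros He Hr HS. unfold Defs.sigma. set (S := Ssum M r) in *.
  unfold Rdiv. apply Rmult_le_compat_r; [left; apply Rinv_0_lt_compat; lra|].
  assert (0 < r l * eps) by (apply Rmult_lt_0_compat; lra).
  assert (Hx : exp (- r l * eps) <= 1) by (apply exp_le_1; lra).
  assert (0 <= (1 - exp (- r l * eps)) * (S - r l)) by (apply Rmult_le_pos; lra).
  nra.
Qed.

Lemma Delta_bar_term_ge w eps S rl :
  0 < w -> 0 < eps -> 0 < rl <= S ->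
  w / (rl / (S + 1)) <= w * exp (- rl * eps) / rl * exp (eps * S) * (1 + S).
Proof.
  intros Hw He Hr.
  replace (w * exp (- rl * eps) / rl * exp (eps * S) * (1 + S))
    with (w * (1 + S) / rl * exp (eps * (S - rl)))
    by (replace (eps * (S - rl)) with (- rl * eps + eps * S) by ring; rewrite exp_plus; field; lra).
  replace (w / (rl / (S + 1))) with (w * (1 + S) / rl * 1) by (field; lra).
  apply Rmult_le_compat_l.
  - apply Rmult_le_pos; [nra|left; apply Rinv_0_lt_compat; lra].
  - rewrite <- exp_0. apply exp_le_monotone. nra.
Qed.

Lemma Delta_bar_ge M w b beta eps r :
  0 < eps -> 0 < beta ->
  (forall i, (i < M)%nat -> 0 < w i /\ 0 < b i) ->
  sumR M (share b w beta) = 1 -> feasible M b eps r ->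
  sumR M w + C1const M w b beta <= Delta_bar M w eps r.
Proof.
  intros He Hbeta Hwb Hm Hf. unfold Delta_bar, C1const.
  set (S := Ssum M r).
  assert (Hr : forall l, (l < M)%nat -> 0 < r l <= S).
  { intros l Hl. split; [apply (Hf l Hl)|].
    apply sumR_term_le; auto. intros i Hi. left; apply (Hf i Hi). }
  assert (HS : 0 <= S) by (apply sumR_nonneg; intros i Hi; left; apply (Hr i Hi)).
  set (q := fun l => r l / (S + 1)).
  assert (Hq : sumR M q <= 1).
  { unfold q. rewrite (sumR_ext M _ (fun l => / (S + 1) * r l)) by (intros; unfold Rdiv; ring).
    rewrite sumR_scal. fold (Ssum M r). fold S.
    apply (Rmult_le_reg_l (S + 1)); [lra|]. field_simplify; lra. }
  assert (Hwf : sumR M (fun i => w i / share b w beta i) <= sumR M (fun i => w i / q i)).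
  { apply waterfilling; auto. intros i Hi.
    destruct (Hwb i Hi), (Hf i Hi) as [Hri Hsig], (Hr i Hi).
    assert (Hqi : 0 < q i) by (apply Rdiv_lt_0_compat; lra).
    repeat split; auto.
    apply Rle_trans with (Defs.sigma M eps r i); auto. apply share_le_sigma; auto. }
  assert (sumR M (fun i => w i / q i)
          <= sumR M (fun l => w l * exp (- r l * eps) / r l * exp (eps * S) * (1 + S))).
  { apply sumR_le. intros i Hi. destruct (Hwb i Hi). apply Delta_bar_term_ge; auto. }
  unfold share in Hwf. lra.
Qed.

Lemma xstar_pos eps : 0 < eps -> 0 < xstar eps.
Proof.
  intros He. unfold xstar.
  assert (0 < / eps) by (apply Rinv_0_lt_compat; lra).
  assert (Hy : sqrt (/ 4 + / eps) * sqrt (/ 4 + / eps) = / 4 + / eps) by (apply sqrt_sqrt; lra).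
  assert (0 <= sqrt (/ 4 + / eps)) by apply sqrt_pos.
  nra.
Qed.

Lemma xstar_quadratic eps : 0 < eps -> xstar eps * (xstar eps + 1) * eps = 1.
Proof.
  intros He. unfold xstar.
  assert (0 < / eps) by (apply Rinv_0_lt_compat; lra).
  assert (Hy : sqrt (/ 4 + / eps) * sqrt (/ 4 + / eps) = / 4 + / eps) by (apply sqrt_sqrt; lra).
  replace ((- / 2 + sqrt (/ 4 + / eps)) * (- / 2 + sqrt (/ 4 + / eps) + 1))
    with (sqrt (/ 4 + / eps) * sqrt (/ 4 + / eps) - / 4) by field.
  rewrite Hy. field. lra.
Qed.

Definition overhead (eps : R) : R := exp (eps * xstar eps) * (1 + xstar eps) / xstar eps.

Lemma overhead_le eps : 0 < eps <= / 4 -> overhead eps <= 1 + 2 * sqrt eps + 10 * eps.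
Proof.
  intros He. unfold overhead.
  assert (Hx := xstar_pos eps (proj1 He)). assert (Hxx := xstar_quadratic eps (proj1 He)).
  set (x := xstar eps) in *. set (s := sqrt eps).
  assert (Hs : s * s = eps) by (apply sqrt_sqrt; lra).
  assert (Hs0 : 0 < s) by (apply sqrt_lt_R0; lra).
  (* x ~ 1/s, so eps x <= s and (1 + x)/x = 1 + eps x + eps by the quadratic *)
  assert (Hex : eps * x <= s) by nra.
  assert (E1 : exp (eps * x) <= 1 + s + 2 * (s * s)).
  { apply Rle_trans with (exp s); [apply exp_le_monotone; exact Hex|].
    apply exp_le_quadratic. nra. }
  assert (E2 : (1 + x) / x = 1 + eps * x + eps).
  { replace ((1 + x) / x) with (1 + / x) by (field; lra).
    replace (/ x) with (eps * (x + 1)); [ring|].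
    apply (Rmult_eq_reg_l x); [|lra]. rewrite Rinv_r by lra. lra. }
  replace (exp (eps * x) * (1 + x) / x) with (exp (eps * x) * ((1 + x) / x)) by (field; lra).
  rewrite E2. assert (0 < exp (eps * x)) by apply exp_pos.
  assert (exp (eps * x) * (1 + eps * x + eps) <= (1 + s + 2 * (s * s)) * (1 + s + s * s))
    by (apply Rmult_le_compat; nra).
  assert (s * s * s <= s * s) by nra. assert (s * s * s * s <= s * s) by nra.
  nra.
Qed.

Section EnergyAdequate.

Variables (M : nat) (w b : nat -> R) (beta : R).
Hypothesis Hw : forall i, (i < M)%nat -> 0 < w i.
Hypothesis Hb : forall i, (i < M)%nat -> 0 < b i.
Hypothesis Hbeta_pos : 0 < beta.
Hypothesis Hbeta : sumR M (share b w beta) = 1.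

Lemma share_pos i : (i < M)%nat -> 0 < share b w beta i.
Proof.
  intros Hi. apply Rmin_glb_lt; auto.
  apply Rmult_lt_0_compat; auto. apply sqrt_lt_R0; auto.
Qed.

Lemma C1const_nonneg : 0 <= C1const M w b beta.
Proof.
  apply sumR_nonneg. intros i Hi. left. apply Rdiv_lt_0_compat; [auto|apply share_pos; auto].
Qed.

Lemma Ssum_rstar eps : Ssum M (rstar b w beta eps) = xstar eps.
Proof.
  unfold Ssum. rewrite (sumR_ext M _ (fun l => xstar eps * share b w beta l))
    by (intros; unfold rstar, share; ring).
  rewrite sumR_scal, Hbeta. ring.
Qed.

Lemma rstar_feasible eps : 0 < eps -> feasible M b eps (rstar b w beta eps).
Proof.
  intros He l Hl.
  assert (Hx := xstar_pos eps He). assert (Hxx := xstar_quadratic eps He).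
  assert (Hml := share_pos l Hl). assert (Hmb : share b w beta l <= b l) by apply Rmin_l.
  split; [apply Rmult_lt_0_compat; auto|].
  unfold Defs.sigma. rewrite Ssum_rstar.
  change (rstar b w beta eps l) with (share b w beta l * xstar eps).
  set (m := share b w beta l) in *. set (x := xstar eps) in *.
  set (t := m * x * eps). replace (- (m * x) * eps) with (- t) by (unfold t; ring).
  assert (Ht : 0 < t) by (unfold t; repeat apply Rmult_lt_0_compat; auto).
  assert (H1 := exp_ineq1_le (- t)).
  assert (H2 : exp (- t) <= 1) by (apply exp_le_1; lra).
  assert (0 < exp (- t)) by apply exp_pos.
  (* 1 - e^(-t) <= t and x^2 eps <= 1 give sigma_l <= m_l *)
  assert (Hnum : (1 - exp (- t)) * x + m * x * exp (- t) <= m * (x + 1)).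
  { assert ((1 - exp (- t)) * x <= t * x) by (apply Rmult_le_compat_r; lra).
    assert (m * x * exp (- t) <= m * x * 1)
      by (apply Rmult_le_compat_l; [apply Rmult_le_pos|]; lra).
    assert (x * x * eps <= 1) by nra.
    unfold t in *. nra. }
  apply Rle_trans with m; [|exact Hmb].
  unfold Rdiv. apply (Rmult_le_reg_r (x + 1)); [lra|].
  rewrite Rmult_assoc, Rinv_l, Rmult_1_r by lra. exact Hnum.
Qed.

Lemma Delta_bar_rstar_le eps :
  0 < eps -> Delta_bar M w eps (rstar b w beta eps) <= sumR M w + C1const M w b beta * overhead eps.
Proof.
  intros He. unfold Delta_bar, C1const, overhead. rewrite Ssum_rstar.
  assert (Hx := xstar_pos eps He). set (x := xstar eps) in *.
  rewrite Rplus_comm, (Rmult_comm (sumR M _)), <- sumR_scal.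
  apply Rplus_le_compat_l, sumR_le. intros i Hi.
  assert (Hmi := share_pos i Hi). assert (Hwi := Hw i Hi).
  change (rstar b w beta eps i) with (share b w beta i * x). fold (share b w beta i).
  set (m := share b w beta i) in *.
  replace (w i * exp (- (m * x) * eps) / (m * x) * exp (eps * x) * (1 + x))
    with (exp (eps * x) * (1 + x) / x * (w i / m) * exp (- (m * x * eps)))
    by (replace (- (m * x) * eps) with (- (m * x * eps)) by ring; field; lra).
  set (E := exp (eps * x) * (1 + x) / x).
  rewrite <- (Rmult_1_r (E * (w i / m))) at 2.
  apply Rmult_le_compat_l.
  - assert (0 < exp (eps * x)) by apply exp_pos.
    left. apply Rmult_lt_0_compat; [|apply Rdiv_lt_0_compat; auto].
    apply Rdiv_lt_0_compat; [apply Rmult_lt_0_compat|]; lra.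
  - apply exp_le_1. assert (0 < m * x * eps) by (repeat apply Rmult_lt_0_compat; auto). lra.
Qed.

Lemma optimality_gap_bounds eps Dopt :
  0 < eps -> is_opt_value M w b eps Dopt ->
  0 <= Delta_bar M w eps (rstar b w beta eps) - Dopt
     <= C1const M w b beta * (overhead eps - 1).
Proof.
  intros He [Hlow Hup].
  assert (H1 := Hlow _ (rstar_feasible eps He)).
  assert (H2 : sumR M w + C1const M w b beta <= Dopt).
  { apply Hup. intros r Hr. apply (Delta_bar_ge M w b beta eps r); auto. }
  assert (H3 := Delta_bar_rstar_le eps He).
  split; lra.
Qed.

End EnergyAdequate.

Lemma little_o_sqrt_of_linear_bound (h : R -> R) (K eps0 : R) :
  0 <= K -> 0 < eps0 ->
  (forall eps, 0 < eps <= eps0 -> 0 <= h eps <= K * eps) ->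
  forall d, 0 < d -> exists eta, 0 < eta /\
    forall eps, 0 < eps < eta -> Rabs (h eps / sqrt eps) < d.
Proof.
  intros HK He0 Hh d Hd. set (k := d / (K + 1)).
  assert (Hk : 0 < k) by (apply Rdiv_lt_0_compat; lra).
  exists (Rmin eps0 (k * k)). split; [apply Rmin_glb_lt; nra|].
  intros eps [He Heta].
  assert (He0' : eps <= eps0) by (assert (H := Rmin_l eps0 (k * k)); lra).
  assert (Hek : eps < k * k) by (assert (H := Rmin_r eps0 (k * k)); lra).
  assert (Hs : sqrt eps * sqrt eps = eps) by (apply sqrt_sqrt; lra).
  assert (Hs0 : 0 < sqrt eps) by (apply sqrt_lt_R0; lra).
  assert (Hsk : sqrt eps < k) by nra.
  destruct (Hh eps (conj He He0')) as [Hh0 HhK].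
  rewrite Rabs_pos_eq by (apply Rmult_le_pos; [lra|left; apply Rinv_0_lt_compat; lra]).
  apply (Rmult_lt_reg_r (sqrt eps)); [exact Hs0|].
  unfold Rdiv. rewrite Rmult_assoc, Rinv_l by lra.
  assert (d = k * (K + 1)) by (unfold k; field; lra).
  nra.
Qed.

(* [HM], [Hsumb] and [Hbeta1] only guarantee that beta* exists; the proof uses just [Hbeta]. *)
Theorem theorem1 (M : nat) (w b : nat -> R) (beta : R) (Dopt : R -> R)
  (HM : (1 <= M)%nat)
  (Hw : forall i, (i < M)%nat -> 0 < w i)
  (Hb : forall i, (i < M)%nat -> 0 < b i)
  (Hsumb : 1 <= sumR M b)
  (Hbeta0 : 0 <= beta)
  (Hbeta1 : beta <= maxR M (fun l => b l / sqrt (w l)))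
  (Hbeta : sumR M (fun i => Rmin (b i) (beta * sqrt (w i))) = 1)
  (HDopt : forall eps, 0 < eps -> is_opt_value M w b eps (Dopt eps)) :
  exists h : R -> R,
    (forall d, 0 < d -> exists eta, 0 < eta /\
        forall eps, 0 < eps < eta -> Rabs (h eps / sqrt eps) < d) /\
    (forall eps, 0 < eps ->
       Rabs (Delta_bar M w eps (rstar b w beta eps) - Dopt eps)
         <= 2 * sqrt eps * C1const M w b beta + h eps).
Proof.
  change (sumR M (share b w beta) = 1) in Hbeta.
  assert (Hbeta_pos := share_sum_one_beta_pos M w b beta Hbeta0 Hbeta).
  set (C1 := C1const M w b beta).
  assert (HC1 : 0 <= C1) by (apply C1const_nonneg; auto).
  set (gap := fun eps => Delta_bar M w eps (rstar b w beta eps) - Dopt eps).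
  exists (fun eps => Rmax 0 (Rabs (gap eps) - 2 * sqrt eps * C1)).
  split.
  - apply (little_o_sqrt_of_linear_bound _ (10 * C1) (/ 4)).
    + lra.
    + lra.
    + intros eps He. split; [apply Rmax_l|]. apply Rmax_lub.
      * nra.
      * destruct (optimality_gap_bounds M w b beta Hw Hb Hbeta_pos Hbeta eps (Dopt eps))
          as [Hg0 Hg1]; [lra|apply HDopt; lra|].
        assert (C1 * (overhead eps - 1) <= C1 * (2 * sqrt eps + 10 * eps)).
        { apply Rmult_le_compat_l; [exact HC1|].
          assert (H := overhead_le eps He). lra. }
        unfold gap. rewrite Rabs_pos_eq by exact Hg0. fold C1 in Hg1. lra.
  - intros eps _. assert (H := Rmax_r 0 (Rabs (gap eps) - 2 * sqrt eps * C1)).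
    unfold gap in *. lra.
Qed.
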